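(* Let $n\ge 1$, let $\vec u=(u_1,\dots,u_n)\in\{-1,1\}^n$, and let $H_c(\vec u)=\sigma_1^{u_1}\cdots\sigma_n^{u_n}+\sigma_1^{-u_1}\cdots\sigma_n^{-u_n}$ acting on $n$ qubits. Let $v_i=(1+u_i)/2\in\{0,1\}$ and $\bar v_i=(1-u_i)/2=1-v_i$, and define $$|x^{\pm}\rangle=\frac{|v_1\cdots v_n\rangle\pm|\bar v_1\cdots\bar v_n\rangle}{\sqrt2}.$$ Let $G$ be any $n$-qubit unitary with $G|x^+\rangle=|0\,1\cdots1\rangle$ and $G|x^-\rangle=|1\,1\cdots1\rangle$ (first qubit in state $0$, resp. $1$, all other qubits in state $1$). For $\theta\in\mathbb{R}$ let $P(\theta)$ be the $n$-qubit multi-controlled phase gate, i.e. the diagonal unitary with $P(\theta)|1\cdots1\rangle=e^{i\theta}|1\cdots1\rangle$ and $P(\theta)|b\rangle=|b\rangle$ for every other computational basis state $|b\rangle$. Let $X_1$ denote the Pauli $X$ gate on the first qubit. Then for every $\beta\in\mathbb{R}$, $$e^{-i\beta H_c(\vec u)}=G^\dagger P(\beta)X_1P(-\beta)X_1G .$$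
   Context: Qubits are labelled $1,\dots,n$; $|b_1\cdots b_n\rangle$ denotes the computational basis state with qubit $i$ in state $b_i$. $\sigma_i^{u}$ denotes the single-qubit matrix $\sigma^{u}$ on qubit $i$ (tensored with identity elsewhere), where $\sigma^{+1}=\begin{pmatrix}0&0\\1&0\end{pmatrix}$ and $\sigma^{-1}=\begin{pmatrix}0&1\\0&0\end{pmatrix}$ in the basis $|0\rangle,|1\rangle$. In the paper, $\vec u$ arises as a solution of $C\vec u=\vec 0$ for a constraint matrix $C$, restricted to the qubits on which it is nonzero. *)

From mathcomp Require Import all_boot all_algebra all_classical all_reals all_analysis complex.
Import GRing.Theory Num.Theory.
Import numFieldNormedType.Exports.
Set Implicit Arguments. Unset Strict Implicit. Unset Printing Implicit Defensive.
Local Open Scope ring_scope.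
Local Open Scope classical_set_scope.

Section QDefs.
Variable R : realType.
Local Notation C := R[i].

(* Computational basis of n qubits: index r : 'I_(2^n) encodes |b_1 ... b_n>
   with qubit 1 the most significant bit.  Qubits are 0-indexed here:
   qubit k+1 of the paper is k : 'I_n. *)
Definition qbit (n : nat) (r : 'I_(2 ^ n)) (k : 'I_n) : bool :=
  odd (r %/ 2 ^ (n.-1 - k)).

Definition ket (n : nat) (b : 'I_n -> bool) : 'cV[C]_(2 ^ n) :=
  \col_r (if [forall k, qbit r k == b k] then 1 else 0).

(* sigma^{+1} = [[0,0],[1,0]] (maps |0> to |1>), sigma^{-1} = [[0,1],[0,0]];
   entry (row a, column c) with a, c bits. *)
Definition sigma1 (u : int) (a c : bool) : C :=
  if u == 1 then (if a && ~~ c then 1 else 0)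
  else (if ~~ a && c then 1 else 0).

Definition sigma_on (n : nat) (k : 'I_n) (u : int) : 'M[C]_(2 ^ n) :=
  \matrix_(r, s) (if [forall j, (j != k) ==> (qbit r j == qbit s j)]
                  then sigma1 u (qbit r k) (qbit s k) else 0).

Definition mxprod (m n : nat) (M : 'I_n -> 'M[C]_m) : 'M[C]_m :=
  \big[mulmx/1%:M]_(i < n) M i.

Definition Hc (n : nat) (u : 'I_n -> int) : 'M[C]_(2 ^ n) :=
  mxprod (fun k => sigma_on k (u k)) + mxprod (fun k => sigma_on k (- u k)).

Definition expi (t : R) : C := (cos t +i* sin t)%C.

Definition Pgate (n : nat) (t : R) : 'M[C]_(2 ^ n) :=
  \matrix_(r, s) (if r == s then
                   (if [forall k, qbit r k] then expi t else 1) else 0).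

Definition Xon (n : nat) (k : 'I_n) : 'M[C]_(2 ^ n) :=
  \matrix_(r, s) (if [forall j, if j == k then qbit r j != qbit s j
                                else qbit r j == qbit s j] then 1 else 0).

Definition dagger (m n : nat) (A : 'M[C]_(m, n)) : 'M[C]_(n, m) :=
  (map_mx (@conjc R) A)^T.

Definition unitary (m : nat) (U : 'M[C]_m) : Prop :=
  dagger U *m U = 1%:M /\ U *m dagger U = 1%:M.

Definition mxpow (m : nat) (A : 'M[C]_m) (k : nat) : 'M[C]_m :=
  iter k (mulmx A) 1%:M.

Definition exp_partial (m : nat) (A : 'M[C]_m) (N : nat) : 'M[C]_m :=
  \sum_(k < N) ((k`!)%:R)^-1 *: mxpow A k.

Definition is_mxexp (m : nat) (A E : 'M[C]_m) : Prop :=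
  forall i j,
    (fun N => complex.Re (exp_partial A N i j)) @ \oo --> complex.Re (E i j) /\
    (fun N => complex.Im (exp_partial A N i j)) @ \oo --> complex.Im (E i j).

Definition miR (b : R) : C := (0 +i* (- b))%C.

Definition invsqrt2 : C := ((Num.sqrt (2 : R))^-1 +i* 0)%C.

End QDefs.

From mathcomp Require Import all_boot all_algebra all_classical all_reals all_analysis complex.
From mathcomp Require Import zify ring.
Import GRing.Theory Num.Theory.
Set Implicit Arguments. Unset Strict Implicit. Unset Printing Implicit Defensive.
Local Open Scope ring_scope.

(* With v_i = (1 + u_i)/2 and w = 1 - v, the two Pauli strings of H_c(u) are |v><w| and
   |w><v|, so H_c(u) = |x+><x+| - |x-><x-| for the orthonormal pair x+, x-.  Hence
   exp(-i beta H_c) = 1 + (e^{-i beta} - 1)|x+><x+| + (e^{i beta} - 1)|x-><x-|.  On the other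
   side, P(theta) = 1 + (e^{i theta} - 1)|1..1><1..1| and X_1 maps |1..1> to |01..1>, so
   P(beta) X_1 P(-beta) X_1 = 1 + (e^{-i beta} - 1)|01..1><01..1| + (e^{i beta} - 1)|1..1><1..1|,
   which conjugation by G turns into the same operator. *)

Lemma bits_inj (n r s : nat) : (r < 2 ^ n)%N -> (s < 2 ^ n)%N ->
  (forall i, (i < n)%N -> odd (r %/ 2 ^ i) = odd (s %/ 2 ^ i)) -> r = s.
Proof.
elim: n r s => [|n IH] r s; first by rewrite !ltnS !leqn0 => /eqP -> /eqP ->.
rewrite expnS => r_lt s_lt bits_rs.
have half_rs : r./2 = s./2.
  apply: IH; rewrite -?divn2; try lia.
  by move=> i lt_in; have := bits_rs i.+1 lt_in; rewrite !expnS !divnMA !divn2.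
have := bits_rs 0%N isT; rewrite !divn1 => odd_rs.
by rewrite -[r]odd_double_half -[s]odd_double_half odd_rs half_rs.
Qed.

Section Qubits.
Variables (R : realType) (n : nat).
Local Notation C := R[i].

Lemma qbit_inj (r s : 'I_(2 ^ n)) : qbit r =1 qbit s -> r = s.
Proof.
move=> eq_rs; apply/val_inj/(@bits_inj n); rewrite ?ltn_ord // => i lt_in.
have lt_k : (n.-1 - i < n)%N by lia.
by have := eq_rs (Ordinal lt_k); rewrite /qbit /= (_ : n.-1 - (n.-1 - i) = i)%N //; lia.
Qed.

Lemma qbit_surj (b : 'I_n -> bool) : exists r : 'I_(2 ^ n), qbit r =1 b.
Proof.
pose bits (r : 'I_(2 ^ n)) : {ffun 'I_n -> bool} := [ffun k => qbit r k].
have bits_inj : injective bits.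
  by move=> r s /ffunP eq_rs; apply: qbit_inj => k; have := eq_rs k; rewrite !ffunE.
have [|idx bitsK idxK] := inj_card_bij bits_inj.
  by rewrite card_ffun card_bool !card_ord.
exists (idx [ffun k => b k]) => k.
by have /ffunP/(_ k) := idxK [ffun k => b k]; rewrite !ffunE.
Qed.

Lemma eq_ket (b b' : 'I_n -> bool) : b =1 b' -> ket R b = ket R b'.
Proof.
by move=> eq_b; apply/matrixP => r j; rewrite !mxE (eq_forallb (fun k => congr1 _ (eq_b k))).
Qed.

Lemma ket_qbit (s : 'I_(2 ^ n)) : ket R (qbit s) = delta_mx s 0.
Proof.
apply/matrixP => r j; rewrite !mxE ord1 eqxx andbT.
have [-> | neq_rs] := eqVneq r s; first by rewrite (introT forallP) // => k.
case: forallP => // eq_rs; case/eqP: neq_rs; exact/qbit_inj/(fun k => eqP (eq_rs k)).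
Qed.

Lemma mx_ket_ext (A B : 'M[C]_(2 ^ n)) :
  (forall b, A *m ket R b = B *m ket R b) -> A = B.
Proof.
move=> eqAB; apply/matrixP => r s.
by have /colP/(_ r) := eqAB (qbit s); rewrite ket_qbit -!colE !mxE.
Qed.

End Qubits.

Section Dagger.
Variable R : realType.
Local Notation C := R[i].

Lemma daggerE m p (A : 'M[C]_(m, p)) i j : dagger A i j = conjc (A j i).
Proof. by rewrite !mxE. Qed.

Lemma dagger_mul m p q (A : 'M[C]_(m, p)) (B : 'M[C]_(p, q)) :
  dagger (A *m B) = dagger B *m dagger A.
Proof.
apply/matrixP => i j; rewrite daggerE !mxE rmorph_sum; apply: eq_bigr => k _.
by rewrite rmorphM !daggerE mulrC.
Qed.

Lemma daggerK m p (A : 'M[C]_(m, p)) : dagger (dagger A) = A.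
Proof. by apply/matrixP => i j; rewrite !daggerE conjcK. Qed.

Lemma dagger_delta m p (i : 'I_m) (j : 'I_p) :
  dagger (delta_mx i j : 'M[C]_(m, p)) = delta_mx j i.
Proof. by rewrite /dagger map_delta_mx trmx_delta. Qed.

Definition projector m (x : 'cV[C]_m) : 'M[C]_m := x *m dagger x.

Lemma projector_idem m (x : 'cV[C]_m) :
  dagger x *m x = 1%:M -> projector x *m projector x = projector x.
Proof. by move=> x_unit; rewrite /projector mulmxA -(mulmxA x) x_unit mulmx1. Qed.

Lemma projector_orth m (x y : 'cV[C]_m) :
  dagger x *m y = 0 -> projector x *m projector y = 0.
Proof. by move=> xy; rewrite /projector mulmxA -(mulmxA x) xy mulmx0 mul0mx. Qed.

Lemma projector_conj m (U : 'M[C]_m) (x : 'cV[C]_m) :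
  dagger U *m projector x *m U = projector (dagger U *m x).
Proof. by rewrite /projector dagger_mul daggerK !mulmxA. Qed.

Lemma dagger_dot_conj m (U : 'M[C]_m) (x y : 'cV[C]_m) : U *m dagger U = 1%:M ->
  dagger (dagger U *m x) *m (dagger U *m y) = dagger x *m y.
Proof. by move=> UU; rewrite dagger_mul daggerK mulmxA -(mulmxA _ U) UU mulmx1. Qed.

Lemma conj_projector_comb m (U : 'M[C]_m) (a b : C) (x y : 'cV[C]_m) :
  dagger U *m U = 1%:M ->
  dagger U *m (1%:M + a *: projector x + b *: projector y) *m U =
  1%:M + a *: projector (dagger U *m x) + b *: projector (dagger U *m y).
Proof.
by move=> UU; rewrite !mulmxDr !mulmxDl mulmx1 UU -!scalemxAr -!scalemxAl !projector_conj.
Qed.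

Lemma projector_add_sub m (c : C) (x y : 'cV[C]_m) :
  projector (c *: (x + y)) - projector (c *: (x - y)) =
  (c * conjc c * 2) *: (x *m dagger y + y *m dagger x).
Proof.
by apply/matrixP => i j; rewrite !mxE !big_ord1 !mxE !rmorphM rmorphD rmorphB /=; ring.
Qed.

Lemma ket_dot_id n (b : 'I_n -> bool) : dagger (ket R b) *m ket R b = 1%:M.
Proof.
have [s /eq_ket <-] := qbit_surj b.
by rewrite ket_qbit dagger_delta mul_delta_mx; apply/matrixP => i j; rewrite !ord1 !mxE.
Qed.

Lemma ket_dot_neq n (b b' : 'I_n -> bool) k :
  b k != b' k -> dagger (ket R b) *m ket R b' = 0.
Proof.
have [s eq_s] := qbit_surj b; have [s' eq_s'] := qbit_surj b'.
rewrite -(eq_ket R eq_s) -(eq_ket R eq_s') -eq_s -eq_s' => neq_k.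
rewrite !ket_qbit dagger_delta mul_delta_mx_0 //.
by apply: contraNneq neq_k => ->.
Qed.

End Dagger.

Lemma big_mulmx_ord_recr (T : pzRingType) (N k : nat) (F : 'I_k.+1 -> 'M[T]_N) :
  \big[mulmx/1%:M]_(i < k.+1) F i =
  (\big[mulmx/1%:M]_(i < k) F (widen_ord (leqnSn k) i)) *m F ord_max.
Proof.
elim: k F => [|k IH] F.
  by rewrite big_ord_recl !big_ord0 mulmx1 mul1mx; congr F; apply: val_inj.
rewrite [LHS]big_ord_recl [in LHS]IH [in RHS]big_ord_recl mulmxA.
by congr (_ *m _ *m _); [|apply: eq_bigr => i _|]; congr F; apply: val_inj.
Qed.

Section LocalOperators.
Variables (R : realType) (n : nat) (f : 'I_n -> bool -> bool -> R[i]).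

Definition local_op (k : 'I_n) : 'M[R[i]]_(2 ^ n) :=
  \matrix_(r, s) (if [forall j, (j != k) ==> (qbit r j == qbit s j)]
                  then f k (qbit r k) (qbit s k) else 0).

Let agree_from m (r s : 'I_(2 ^ n)) :=
  [forall j : 'I_n, (m <= j)%N ==> (qbit r j == qbit s j)].

Let agree_off (k : 'I_n) (r s : 'I_(2 ^ n)) :=
  [forall j, (j != k) ==> (qbit r j == qbit s j)].

Lemma agree_from0 (r s : 'I_(2 ^ n)) : agree_from 0 r s = (r == s).
Proof.
apply/forallP/eqP => [agree_rs | -> j]; last by rewrite eqxx implybT.
by apply: qbit_inj => j; have := agree_rs j; rewrite leq0n => /eqP.
Qed.

Lemma local_op_prefix_entry m (le_mn : (m <= n)%N) (r s : 'I_(2 ^ n)) :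
  (\big[mulmx/1%:M]_(i < m) local_op (widen_ord le_mn i)) r s =
  (agree_from m r s)%:R *
  \prod_(i < m)
     f (widen_ord le_mn i) (qbit r (widen_ord le_mn i)) (qbit s (widen_ord le_mn i)).
Proof.
elim: m le_mn r s => [|m IH] le_mn r s; first by rewrite !big_ord0 mulr1 mxE agree_from0.
rewrite big_mulmx_ord_recr mxE.
have widenK (i : 'I_m) :
  widen_ord le_mn (widen_ord (leqnSn m) i) = widen_ord (ltnW le_mn) i by apply: val_inj.
under eq_bigr => t _ do rewrite (eq_bigr _ (fun i _ => congr1 local_op (widenK i))) IH mxE.
set km := widen_ord le_mn ord_max.
have neq_km (j : 'I_n) : (j != km) = (val j != m) by rewrite -(inj_eq val_inj).
(* The only intermediate index t that can contribute to the sum over t agrees with s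
   on the qubits below m and with r on the others. *)
have [t0 t0E] := qbit_surj (fun j : 'I_n => if (j < m)%N then qbit s j else qbit r j).
have t0_unique t : agree_from m r t -> agree_off km t s -> t = t0.
  move=> /forallP agree_rt /forallP agree_ts; apply: qbit_inj => j; rewrite t0E.
  case: ltnP => [lt_jm | le_mj]; last by have /implyP/(_ le_mj)/eqP := agree_rt j.
  by have := agree_ts j; rewrite neq_km neq_ltn lt_jm => /eqP.
have agree_trans t : agree_from m r t -> agree_off km t s -> agree_from m.+1 r s.
  move=> /forallP agree_rt /forallP agree_ts; apply/forallP => j; apply/implyP => lt_mj.
  have := agree_ts j; rewrite neq_km gtn_eqF //= => /eqP <-.
  by have := agree_rt j; rewrite ltnW.
have [agree_rs | disagree_rs] := boolP (agree_from m.+1 r s); last first.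
  rewrite mul0r big1 // => t _.
  have [agree_rt | ] := boolP (agree_from m r t); last by rewrite !mul0r.
  case: ifP => [agree_ts | _]; last by rewrite mulr0.
  by case/negP: disagree_rs; exact: agree_trans agree_ts.
rewrite (bigD1 t0) //= [X in _ + X]big1 ?addr0 => [|t neq_t0]; last first.
  have [agree_rt|] := boolP (agree_from m r t); last by rewrite !mul0r.
  case: ifP => [agree_ts | _]; last by rewrite mulr0.
  by case/eqP: neq_t0; exact: t0_unique.
have agree_rt0 : agree_from m r t0.
  by apply/forallP => j; apply/implyP => le_mj; rewrite t0E ltnNge le_mj.
have agree_t0s : [forall j, (j != km) ==> (qbit t0 j == qbit s j)].
  apply/forallP => j; rewrite neq_km t0E; apply/implyP => neq_jm; case: ltnP => // le_mj.
  by have /forallP/(_ j) := agree_rs; rewrite ltn_neqAle eq_sym neq_jm le_mj.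
rewrite agree_rt0 agree_t0s big_ord_recr /= t0E /= ltnn.
by rewrite !mul1r; congr (_ * _); apply: eq_bigr => i _; rewrite widenK t0E /= ltn_ord.
Qed.

Lemma local_op_prod_entry (r s : 'I_(2 ^ n)) :
  (\big[mulmx/1%:M]_(i < n) local_op i) r s = \prod_(i < n) f i (qbit r i) (qbit s i).
Proof.
have widen_id (i : 'I_n) : widen_ord (leqnn n) i = i by apply: val_inj.
have := local_op_prefix_entry (leqnn n) r s.
under eq_bigr => i _ do rewrite widen_id.
have -> : agree_from n r s by apply/forallP => j; rewrite leqNgt ltn_ord.
by move=> ->; rewrite mul1r; apply: eq_bigr => i _; rewrite widen_id.
Qed.

End LocalOperators.

Section Operators.
Variables (R : realType) (n : nat).
Local Notation C := R[i].

Lemma ketE (b : 'I_n -> bool) r j : ket R b r j = [forall k, qbit r k == b k]%:R.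
Proof. by rewrite mxE; case: ifP. Qed.

Lemma outer_ketE (b : 'I_n -> bool) (b' : 'I_n -> bool) r s :
  (ket R b *m dagger (ket R b')) r s =
  [forall k, qbit r k == b k]%:R * [forall k, qbit s k == b' k]%:R.
Proof. by rewrite !mxE big_ord1 daggerE !ketE conjc_nat. Qed.

Lemma prodr_bool (P : pred 'I_n) : \prod_(k < n) (P k)%:R = [forall k, P k]%:R :> C.
Proof.
have [all_P | /forallPn[k /negbTE Pk]] := boolP [forall k, P k].
  by apply: big1 => k _; rewrite (forallP all_P k).
by rewrite (bigD1 k) //= Pk mul0r.
Qed.

Lemma sigma1E (x : int) a c : x = 1 \/ x = -1 ->
  sigma1 R x a c = (a == (x == 1))%:R * (c == (x != 1))%:R.
Proof. by case=> ->; case: a; case: c; rewrite /= ?mulr1 ?mulr0. Qed.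

Lemma sigma1NE (x : int) a c : x = 1 \/ x = -1 ->
  sigma1 R (- x) a c = (a == (x != 1))%:R * (c == (x == 1))%:R.
Proof. by case=> ->; case: a; case: c; rewrite /= ?mulr1 ?mulr0. Qed.

Lemma Hc_outer (u : 'I_n -> int) : (forall k, u k = 1 \/ u k = -1) ->
  Hc R u = ket R (fun k => u k == 1) *m dagger (ket R (fun k => u k != 1)) +
           ket R (fun k => u k != 1) *m dagger (ket R (fun k => u k == 1)).
Proof.
move=> u_sign; apply/matrixP => r s.
rewrite [LHS]mxE [in RHS]mxE !outer_ketE.
rewrite (local_op_prod_entry (fun k => sigma1 R (u k))).
rewrite (local_op_prod_entry (fun k => sigma1 R (- u k))).
rewrite (eq_bigr _ (fun k _ => sigma1E _ _ (u_sign k))).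
rewrite [X in _ + X](eq_bigr _ (fun k _ => sigma1NE _ _ (u_sign k))).
by rewrite !big_split !prodr_bool.
Qed.

Lemma Pgate_projector (t : R) :
  Pgate n t = 1%:M + (expi t - 1) *: projector (ket R (fun _ => true)).
Proof.
apply/matrixP => r s; rewrite mxE [in RHS]mxE [in RHS]mxE [in RHS]mxE outer_ketE.
rewrite (eq_forallb (fun k => eqb_id (qbit r k))) (eq_forallb (fun k => eqb_id (qbit s k))).
have [<- | neq_rs] := eqVneq r s; first by case: [forall k, qbit r k]; rewrite /=; ring.
have [/forallP all_r | _] := boolP [forall k, qbit r k]; last by rewrite mul0r mulr0 addr0.
have [/forallP all_s | _] := boolP [forall k, qbit s k]; last by rewrite !mulr0 addr0.
by case/eqP: neq_rs; apply: qbit_inj => k; rewrite all_r all_s.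
Qed.

Lemma Xon_ket (k : 'I_n) (b : 'I_n -> bool) :
  Xon R k *m ket R b = ket R (fun j => b j (+) (j == k)).
Proof.
have [s eq_s] := qbit_surj b.
have eq_flip : (fun j => qbit s j (+) (j == k)) =1 (fun j => b j (+) (j == k)).
  by move=> j; rewrite eq_s.
rewrite -(eq_ket R eq_s) -(eq_ket R eq_flip).
apply/matrixP => r j; rewrite ket_qbit -colE !mxE; congr (if _ then _ else _).
by apply: eq_forallb => i; case: (i == k); case: (qbit r i); case: (qbit s i).
Qed.

Lemma dagger_Xon (k : 'I_n) : dagger (Xon R k) = Xon R k.
Proof.
apply/matrixP => r s; rewrite daggerE !mxE.
under eq_forallb => j do rewrite (eq_sym (qbit s j)).
by case: ifP; rewrite ?conjc1 ?conjc0.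
Qed.

Lemma Xon_involutive (k : 'I_n) : Xon R k *m Xon R k = 1%:M.
Proof.
apply: mx_ket_ext => b; rewrite mul1mx -mulmxA !Xon_ket.
by apply: eq_ket => j; rewrite -addbA addbb addbF.
Qed.

Lemma phase_circuit_projectors (k0 : 'I_n) (beta : R) : val k0 = 0%N ->
  Pgate n beta *m Xon R k0 *m Pgate n (- beta) *m Xon R k0 =
  1%:M + (expi (- beta) - 1) *: projector (ket R (fun k : 'I_n => val k != 0%N))
       + (expi beta - 1) *: projector (ket R (fun k : 'I_n => true)).
Proof.
move=> k0E; set e0 := ket R _; set e1 := ket R _.
have X_e1 : Xon R k0 *m e1 = e0.
  by rewrite Xon_ket; apply: eq_ket => j; rewrite -(inj_eq val_inj) k0E.
have XPX : Xon R k0 *m Pgate n (- beta) *m Xon R k0 = 1%:M + (expi (- beta) - 1) *: projector e0.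
  rewrite Pgate_projector mulmxDr mulmxDl mulmx1 Xon_involutive -scalemxAr -scalemxAl.
  by rewrite -{1}dagger_Xon projector_conj dagger_Xon X_e1.
have e1_e0 : projector e1 *m projector e0 = 0.
  by apply/projector_orth/(@ket_dot_neq _ _ _ _ k0); rewrite /= k0E.
rewrite -!mulmxA [X in _ *m X]mulmxA XPX Pgate_projector.
rewrite mulmxDl mul1mx mulmxDr mulmx1 -!scalemxAl -scalemxAr e1_e0 !scaler0 addr0.
by rewrite addrAC.
Qed.

End Operators.

Section ComplexSeries.
Import numFieldNormedType.Exports.
Local Open Scope classical_set_scope.
Variable R : realType.
Local Notation C := R[i].

Definition cvgC (z : nat -> C) (l : C) :=
  (fun N => complex.Re (z N)) @ \oo --> complex.Re l /\
  (fun N => complex.Im (z N)) @ \oo --> complex.Im l.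

Lemma ReD (x y : C) : complex.Re (x + y) = complex.Re x + complex.Re y.
Proof. by case: x; case: y. Qed.

Lemma ImD (x y : C) : complex.Im (x + y) = complex.Im x + complex.Im y.
Proof. by case: x; case: y. Qed.

Lemma ReM (x y : C) :
  complex.Re (x * y) = complex.Re x * complex.Re y - complex.Im x * complex.Im y.
Proof. by case: x => a b; case: y. Qed.

Lemma ImM (x y : C) :
  complex.Im (x * y) = complex.Re x * complex.Im y + complex.Im x * complex.Re y.
Proof. by case: x => a b; case: y => c d /=; rewrite addrC. Qed.

Lemma cvgCD (z z' : nat -> C) (l l' : C) :
  cvgC z l -> cvgC z' l' -> cvgC (fun N => z N + z' N) (l + l').
Proof.
move=> [Re_z Im_z] [Re_z' Im_z']; rewrite /cvgC ReD ImD.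
by split; [under eq_fun do rewrite ReD | under eq_fun do rewrite ImD]; apply: cvgD.
Qed.

Lemma cvgCMr (z : nat -> C) (l c : C) : cvgC z l -> cvgC (fun N => z N * c) (l * c).
Proof.
move=> [Re_z Im_z]; rewrite /cvgC ReM ImM.
split; [under eq_fun do rewrite ReM | under eq_fun do rewrite ImM].
  by apply: cvgB; apply: cvgMr_tmp.
by apply: cvgD; apply: cvgMr_tmp.
Qed.

Lemma cvgC_lt0n : cvgC (fun N => (0 < N)%N%:R) 1.
Proof. by split; rewrite -cvg_shiftS; apply: cvg_cst. Qed.

Definition exp_series (z : C) (N : nat) : C := \sum_(k < N) (k`!%:R)^-1 * z ^+ k.

Lemma expr_iR_even (x : R) m :
  (0 +i* x)%C ^+ m.*2 = (((-1) ^+ m * x ^+ m.*2) +i* 0)%C.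
Proof.
rewrite -mul2n GRing.exprM.
have -> : (0 +i* x)%C ^+ 2 = ((- x ^+ 2) +i* 0)%C.
  by rewrite expr2; apply/eqP; rewrite eq_complex /=; apply/andP; split; apply/eqP; ring.
by rewrite !complexr0 -rmorphXn GRing.exprM -exprMn mulN1r.
Qed.

Lemma expr_iR_odd (x : R) m :
  (0 +i* x)%C ^+ m.*2.+1 = (0 +i* ((-1) ^+ m * x ^+ m.*2.+1))%C.
Proof.
rewrite exprS expr_iR_even; apply/eqP; rewrite eq_complex /=.
by apply/andP; split; apply/eqP; rewrite ?exprS; ring.
Qed.

Lemma invr_natC (m : nat) : (m%:R : C)^-1 = ((m%:R : R)^-1 +i* 0)%C.
Proof. by rewrite -(rmorph_nat (real_complex R)) -fmorphV. Qed.

Lemma Re_exp_series_iR (x : R) N :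
  complex.Re (exp_series (0 +i* x)%C N) = series (cos_coeff x) N.
Proof.
rewrite /series /= big_mkord /exp_series (big_morph _ ReD (erefl (complex.Re 0))).
apply: eq_bigr => k _; rewrite invr_natC /cos_coeff -(odd_double_half k).
case: (odd k); move: (k./2) => m; rewrite ?add1n ?add0n.
  by rewrite expr_iR_odd /= odd_double /= -?exprnP; ring.
by rewrite expr_iR_even /= odd_double doubleK /= -?exprnP; ring.
Qed.

Lemma Im_exp_series_iR (x : R) N :
  complex.Im (exp_series (0 +i* x)%C N) = series (sin_coeff x) N.
Proof.
rewrite /series /= big_mkord /exp_series (big_morph _ ImD (erefl (complex.Im 0))).
apply: eq_bigr => k _; rewrite invr_natC /sin_coeff -(odd_double_half k).
case: (odd k); move: (k./2) => m; rewrite ?add1n ?add0n.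
  by rewrite expr_iR_odd /= odd_double /= doubleK; ring.
by rewrite expr_iR_even /= odd_double /=; ring.
Qed.

Lemma cvgC_exp_series_iR (x : R) : cvgC (exp_series (0 +i* x)%C) (expi x).
Proof.
split; rewrite /expi /= unlock.
  by under eq_fun do rewrite Re_exp_series_iR; exact: is_cvg_series_cos_coeff.
by under eq_fun do rewrite Im_exp_series_iR; exact: is_cvg_series_sin_coeff.
Qed.

End ComplexSeries.

Section OrthogonalIdempotents.
Variables (R : realType) (m : nat) (P1 P2 : 'M[R[i]]_m).
Hypotheses (P1_idem : P1 *m P1 = P1) (P2_idem : P2 *m P2 = P2).
Hypotheses (P1_P2 : P1 *m P2 = 0) (P2_P1 : P2 *m P1 = 0).

Lemma mxpow_scale_sub (a : R[i]) k :
  mxpow (a *: (P1 - P2)) k =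
  (k == 0)%N%:R *: (1%:M - P1 - P2) + a ^+ k *: P1 + (- a) ^+ k *: P2.
Proof.
elim: k => [|k IH]; first by apply/matrixP => i j; rewrite /mxpow /= !mxE; ring.
rewrite [LHS]/= -/(mxpow _ k) IH !mulmxDr -!scalemxAr -!scalemxAl !mulmxBl !mulmxBr.
rewrite !mulmx1 P1_idem P2_idem P1_P2 P2_P1.
by apply/matrixP => i j; rewrite !mxE !exprS /=; ring.
Qed.

Lemma exp_partial_scale_sub (a : R[i]) N i j :
  exp_partial (a *: (P1 - P2)) N i j =
  (0 < N)%N%:R * (1%:M - P1 - P2) i j + exp_series a N * P1 i j + exp_series (- a) N * P2 i j.
Proof.
elim: N => [|N IH].
  by rewrite /exp_partial /exp_series !big_ord0 !mxE ltnn /= mulr0n !mul0r !addr0.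
rewrite /exp_partial big_ord_recr mxE -/(exp_partial _ N) IH /exp_series !big_ord_recr /=.
rewrite mxpow_scale_sub !mxE.
by case: N IH => [|N] _; rewrite ?big_ord0 ?invr1 /=; ring.
Qed.

Lemma is_mxexp_iR_scale_sub (x : R) :
  is_mxexp ((0 +i* x)%C *: (P1 - P2)) (1%:M + (expi x - 1) *: P1 + (expi (- x) - 1) *: P2).
Proof.
move=> i j; suff : cvgC (fun N => exp_partial ((0 +i* x)%C *: (P1 - P2)) N i j)
  ((1%:M + (expi x - 1) *: P1 + (expi (- x) - 1) *: P2) i j) by [].
under eq_fun do rewrite exp_partial_scale_sub.
have -> : (1%:M + (expi x - 1) *: P1 + (expi (- x) - 1) *: P2) i j =
    1 * (1%:M - P1 - P2) i j + expi x * P1 i j + expi (- x) * P2 i j.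
  by rewrite !mxE; ring.
have -> : (- (0 +i* x))%C = (0 +i* - x)%C by apply/eqP; rewrite eq_complex /= oppr0 !eqxx.
apply: cvgCD; [apply: cvgCD|]; apply: cvgCMr.
- exact: cvgC_lt0n.
- exact: cvgC_exp_series_iR.
- exact: cvgC_exp_series_iR.
Qed.

End OrthogonalIdempotents.

Lemma invsqrt2_normalizes (R : realType) : invsqrt2 R * conjc (invsqrt2 R) * 2 = 1.
Proof.
rewrite /invsqrt2 complexr0 conjc_real -(rmorph_nat (real_complex R) 2) -!rmorphM.
by rewrite -invfM -expr2 sqr_sqrtr ?ler0n // mulVf ?pnatr_eq0 // rmorph1.
Qed.

Theorem lemma2 (R : realType) (n : nat) (hn : (1 <= n)%N)
  (u : 'I_n -> int) (hu : forall k, u k = 1 \/ u k = -1)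
  (G : 'M[R[i]]_(2 ^ n)) (hG : unitary G)
  (hGp : G *m (invsqrt2 R *: (ket R (fun k => u k == 1) + ket R (fun k => u k != 1)))
         = ket R (fun k : 'I_n => nat_of_ord k != 0%N))
  (hGm : G *m (invsqrt2 R *: (ket R (fun k => u k == 1) - ket R (fun k => u k != 1)))
         = ket R (fun k : 'I_n => true))
  (beta : R) :
  is_mxexp (miR beta *: Hc R u)
    (dagger G *m Pgate n beta *m Xon R (Ordinal hn) *m Pgate n (- beta)
       *m Xon R (Ordinal hn) *m G).
Proof.
set e0 := (X in _ = X) in hGp; set e1 := (X in _ = X) in hGm.
set xp := (X in G *m X) in hGp; set xm := (X in G *m X) in hGm.
have [dG_G G_dG] := hG.
have xpE : dagger G *m e0 = xp by rewrite -hGp mulmxA dG_G mul1mx.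
have xmE : dagger G *m e1 = xm by rewrite -hGm mulmxA dG_G mul1mx.
have dot_x := dagger_dot_conj _ _ G_dG.
have xp_xp : dagger xp *m xp = 1%:M by rewrite -xpE dot_x ket_dot_id.
have xm_xm : dagger xm *m xm = 1%:M by rewrite -xmE dot_x ket_dot_id.
have xp_xm : dagger xp *m xm = 0.
  by rewrite -xpE -xmE dot_x (@ket_dot_neq _ _ _ _ (Ordinal hn)).
have xm_xp : dagger xm *m xp = 0.
  by rewrite -xpE -xmE dot_x (@ket_dot_neq _ _ _ _ (Ordinal hn)).
have HcE : Hc R u = projector xp - projector xm.
  by rewrite projector_add_sub invsqrt2_normalizes scale1r Hc_outer.
have circuitE : dagger G *m Pgate n beta *m Xon R (Ordinal hn) *m Pgate n (- beta)
    *m Xon R (Ordinal hn) *m G =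
    1%:M + (expi (- beta) - 1) *: projector xp + (expi (- - beta) - 1) *: projector xm.
  rewrite opprK -xpE -xmE -conj_projector_comb //.
  by rewrite -(@phase_circuit_projectors R n (Ordinal hn) beta) // !mulmxA.
rewrite HcE circuitE; apply: is_mxexp_iR_scale_sub.
- exact: projector_idem.
- exact: projector_idem.
- exact: projector_orth.
- exact: projector_orth.
Qed.
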